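(* Fix $N\ge1$ and an environment of order $N$ with mean matrix $\mathbf{M}=(M(i,j))_{i,j=1}^N$, $M(i,j)=j\,p_{ij}$, and macro mean matrix $\mathbf{M}_{macro}=(M_{macro}(i,j))$, $M_{macro}(i,j)=i\,p_{ij}=\frac{i}{j}M(i,j)$. Let $\rho$ be the Perron root of $\mathbf{M}$ and $\mathbf{u}=(u_1,\dots,u_N)$ the right eigenvector of $\mathbf{M}$ corresponding to $\rho$ with $u_1+\dots+u_N=1$. Then $\rho$ is the maximal in modulus eigenvalue of $\mathbf{M}_{macro}$, and the vector $\mathbf{U}=(U_1,\dots,U_N)$ with $$U_j=\frac{j\,u_j}{\sum_{k=1}^N k\,u_k},\quad j=1,\dots,N,$$ is a right eigenvector of $\mathbf{M}_{macro}$ corresponding to $\rho$.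
   Context: An environment of order $N$ is a tuple $\{P(i;\cdot),\ i=1,\dots,N\}$ where $P(i;\cdot)$ is a probability measure on $\{0,1,\dots,N\}^i$ invariant under permutations of coordinates; $p_{ij}=\sum_{k_2,\dots,k_i}P(i;(j,k_2,\dots,k_i))$ is the probability that a given member of a sibling group of size $i$ has exactly $j$ children. $\mathbf{M}$ is the mean matrix of the individual offspring laws (entries $j p_{ij}$), and $\mathbf{M}_{macro}$ is the mean matrix of the macro process whose $(i,j)$ entry is the expected number of size-$j$ sibling groups produced by one size-$i$ sibling group. The Perron root is the maximal-modulus eigenvalue of the nonnegative matrix $\mathbf{M}$. *)

From HB Require Import structures.
From mathcomp Require Import all_boot all_order all_fingroup all_algebra.
From mathcomp Require Import complex.
Set Implicit Arguments. Unset Strict Implicit. Unset Printing Implicit Defensive.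
Import Order.TTheory GRing.Theory Num.Theory.
Local Open Scope ring_scope.

(* Sibling-group sizes i = 1..N are encoded by i' : 'I_N with i = i'.+1;
   numbers of children j = 0..N are encoded by j : 'I_N.+1.
   An environment of order N: for each size i, a probability measure P(i;.)
   on {0,...,N}^i (as a finite function on i-tuples), invariant under
   permutations of coordinates. *)
Record environment (R : numDomainType) (N : nat) := Environment {
  envP : forall i : 'I_N, {ffun i.+1.-tuple 'I_N.+1 -> R};
  envP_ge0 : forall i t, 0 <= envP i t;
  envP_sum1 : forall i, \sum_t envP i t = 1;
  envP_perm : forall (i : 'I_N) (s : 'S_i.+1) (t : i.+1.-tuple 'I_N.+1),
      envP i [tuple tnth t (s k) | k < i.+1] = envP i t
}.

(* p_{ij}: probability that a given (the first) member of a sibling group of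
   size i.+1 has exactly j children. *)
Definition env_p (R : numDomainType) N (E : environment R N) (i : 'I_N)
  (j : 'I_N.+1) : R :=
  \sum_(t : i.+1.-tuple 'I_N.+1 | tnth t ord0 == j) envP E i t.

Definition meanM (R : numDomainType) N (E : environment R N) : 'M[R]_N :=
  \matrix_(i < N, j < N) ((j.+1)%:R * env_p E i (lift ord0 j)).

Definition meanMmacro (R : numDomainType) N (E : environment R N) : 'M[R]_N :=
  \matrix_(i < N, j < N) ((i.+1)%:R * env_p E i (lift ord0 j)).

Definition max_modulus_eigenvalue (R : rcfType) N (A : 'M[R]_N) (r : R) : Prop :=
  eigenvalue (map_mx (fun x : R => x%:C%C) A) r%:C%C /\
  forall z : R[i], eigenvalue (map_mx (fun x : R => x%:C%C) A) z -> `|z| <= `|r%:C%C|.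

Definition perron_root (R : rcfType) N (A : 'M[R]_N) (r : R) : Prop :=
  0 <= r /\ max_modulus_eigenvalue A r.

From HB Require Import structures.
From mathcomp Require Import all_boot all_order all_fingroup all_algebra.
From mathcomp Require Import complex.
Set Implicit Arguments. Unset Strict Implicit. Unset Printing Implicit Defensive.
Import Order.TTheory GRing.Theory Num.Theory.
Local Open Scope ring_scope.

(* With D = diag(1, ..., N), the identity M_macro(i,j) = (i/j) M(i,j) reads
   M_macro D = D M, i.e. M_macro = D M D^-1. Similar matrices have the same
   complex spectrum, so rho is also the maximal-modulus eigenvalue of
   M_macro, and D u, whose normalisation is U, is an eigenvector of M_macro
   for rho. *)

Lemma eigenvalue_intertwine (F : fieldType) (n : nat) (A B D : 'M[F]_n) :
  D \in unitmx -> A *m D = D *m B -> eigenvalue A =1 eigenvalue B.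
Proof.
move=> D_unit AD_DB a.
have DB_AD : similar D B A by apply/(similarP D_unit).
have D_free : row_free D by rewrite row_free_unit.
apply/idP/idP.
- have /eqP <- := DB_AD.
  exact/eigenvalue_conjmx/D_free/stablemx_unit.
- rewrite (similarLR D_unit DB_AD).
  by apply/eigenvalue_conjmx; rewrite ?stablemx_unit ?row_free_unit ?unitmx_inv.
Qed.

Lemma max_modulus_eigenvalue_intertwine (R : rcfType) (n : nat)
    (A B D : 'M[R]_n) (r : R) :
  D \in unitmx -> A *m D = D *m B ->
  max_modulus_eigenvalue B r -> max_modulus_eigenvalue A r.
Proof.
move=> D_unit AD_DB; rewrite /max_modulus_eigenvalue.
set toC := map_mx _.
have toC_unit : toC D \in unitmx by rewrite map_unitmx.
have toC_AD_DB : toC A *m toC D = toC D *m toC B by rewrite -!map_mxM AD_DB.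
have eigAB := eigenvalue_intertwine toC_unit toC_AD_DB.
by move=> [eigB maxB]; split=> [|z]; rewrite eigAB; [exact: eigB | exact: maxB].
Qed.

Lemma eigenvector_intertwine (R : comNzRingType) (n : nat)
    (A B D : 'M[R]_n) (u : 'cV[R]_n) (a : R) :
  A *m D = D *m B -> B *m u = a *: u -> A *m (D *m u) = a *: (D *m u).
Proof. by move=> AD_DB Bu; rewrite mulmxA AD_DB -mulmxA Bu scalemxAr. Qed.

Definition size_diag (R : nzRingType) (N : nat) : 'M[R]_N :=
  diag_mx (\row_(j < N) (j.+1)%:R).

Lemma size_diag_unit (R : numFieldType) (N : nat) : size_diag R N \in unitmx.
Proof.
rewrite unitmxE det_diag unitfE; apply/prodf_neq0 => j _.
by rewrite mxE pnatr_eq0.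
Qed.

Lemma meanMmacro_intertwine (R : numDomainType) (N : nat) (E : environment R N) :
  meanMmacro E *m size_diag R N = size_diag R N *m meanM E.
Proof.
apply/matrixP => i j; rewrite /size_diag.
by rewrite mul_mx_diag mul_diag_mx !mxE -mulrA [env_p _ _ _ * _]mulrC.
Qed.

Lemma size_weighted_sum_ge (R : numDomainType) (N : nat) (u : 'cV[R]_N) :
  (forall j, 0 <= u j ord0) ->
  \sum_(j < N) u j ord0 <= \sum_(j < N) (j.+1)%:R * u j ord0.
Proof.
move=> u_ge0; apply: ler_sum => j _.
by rewrite -{1}[u j ord0]mul1r ler_wpM2r // ler1n.
Qed.

Theorem lemma2 (R : rcfType) (N : nat) (hN : (1 <= N)%N)
  (E : environment R N) (rho : R) (u : 'cV[R]_N) :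
  perron_root (meanM E) rho ->
  meanM E *m u = rho *: u ->
  (forall j, 0 <= u j ord0) ->
  \sum_(j < N) u j ord0 = 1 ->
  let U : 'cV[R]_N :=
    \col_(j < N) ((j.+1)%:R * u j ord0 / \sum_(k < N) (k.+1)%:R * u k ord0) in
  max_modulus_eigenvalue (meanMmacro E) rho /\
  U != 0 /\ meanMmacro E *m U = rho *: U.
Proof.
move=> [_ rho_max] Mu u_ge0 u_sum1 U.
set s := \sum_(k < N) (k.+1)%:R * u k ord0.
have D_unit := size_diag_unit R N.
have macro_D := meanMmacro_intertwine E.
have s_gt0 : 0 < s by rewrite (lt_le_trans ltr01) // -u_sum1 size_weighted_sum_ge.
have UE : U = s^-1 *: (size_diag R N *m u).
  by apply/matrixP => j k; rewrite mul_diag_mx !mxE (ord1 k) mulrC.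
have u_neq0 : u != 0.
  apply/eqP => u0; move/eqP: u_sum1; apply/negP.
  by rewrite u0 big1 => [|j _]; rewrite ?mxE // eq_sym oner_eq0.
split; first exact: max_modulus_eigenvalue_intertwine D_unit macro_D rho_max.
split.
- rewrite UE scaler_eq0 invr_eq0 (gt_eqF s_gt0) /=.
  by apply: contraNneq u_neq0 => Du0; rewrite -(mulKmx D_unit u) Du0 mulmx0.
- by rewrite UE -scalemxAr (eigenvector_intertwine macro_D Mu) scalerA mulrC -scalerA.
Qed.
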